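(* (i) The set of symplectic formal power series is a subalgebra of $\mathbb{C}[[x]]$. (ii) A meromorphic function $\psi(t)$ is symplectic of order $d$ at $a\in\mathbb{C}$ if and only if there exists a formal power series $\rho(y)\in\mathbb{C}[[y]]$ such that the Laurent expansion of $\psi(t)$ at $t=a$ equals $\frac{1}{(a-t)^d}\,\rho\!\left(\frac{(a-t)^2}{1-a+t}\right)$. (iii) If $\psi_1(t)$ is symplectic at $a\in\mathbb{C}$ of order $d_1$ and $\psi_2(t)$ is symplectic at $a$ of order $d_2$, then $\psi_1(t)\psi_2(t)$ is symplectic at $a$ of order $d_1+d_2$.
   Context: A formal power series $\varphi(x)=\sum_{i\ge0}\gamma_i x^i\in\mathbb{C}[[x]]$ is called symplectic if for every $m\ge1$ one has $\sum_{k=0}^{m-1}(-1)^k\binom{m-1}{k}\gamma_{m+k}=0$. A meromorphic function $\psi(t)$ whose pole at $t=a$ has order at most $d\in\mathbb{Z}$ is called symplectic at $a$ of order $d$ if the formal power series $x^d\psi(a-x)\in\mathbb{C}[[x]]$ is symplectic. In (ii) the expression is understood as a formal Laurent series in the variable $x=a-t$, with $\frac{(a-t)^2}{1-a+t}=\frac{x^2}{1-x}$. *)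

From HB Require Import structures.
From mathcomp Require Import all_boot all_order all_algebra.
From mathcomp Require Import complex.
From mathcomp Require Import classical_sets fsbigop reals.
Set Implicit Arguments. Unset Strict Implicit. Unset Printing Implicit Defensive.
Import Order.TTheory GRing.Theory Num.Theory.
Local Open Scope ring_scope.

Section Defs.
Variable C : comRingType.

Definition fps := nat -> C.

Definition symplectic (g : fps) : Prop :=
  forall m : nat, (0 < m)%N ->
    \sum_(k < m) (-1) ^+ k * ('C(m.-1, k))%:R * g (m + k)%N = 0.

Definition fps_one : fps := fun n => (n == 0%N)%:R.
Definition fps_add (f g : fps) : fps := fun n => f n + g n.
Definition fps_scale (c : C) (f : fps) : fps := fun n => c * f n.
Definition fps_mul (f g : fps) : fps :=
  fun n => \sum_(i < n.+1) f i * g (n - i)%N.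
Definition fps_pow (f : fps) (k : nat) : fps := iter k (fps_mul f) fps_one.

(* Substitution rho(s(x)) of a series s with zero constant term into rho:
   the coefficient of x^n only involves powers s^k with k <= n. *)
Definition fps_comp (rho s : fps) : fps :=
  fun n => \sum_(k < n.+1) rho k * fps_pow s k n.

(* The series x^2/(1-x) = x^2 * (sum_j x^j). *)
Definition fps_x2 : fps := fun n => (n == 2%N)%:R.
Definition fps_geom : fps := fun _ => 1.
Definition fps_s : fps := fps_mul fps_x2 fps_geom.

(* Formal Laurent series in the local variable x = a - t: the Laurent
   expansion at t = a of a meromorphic germ psi is n |-> coefficient of x^n. *)
Definition laurent := int -> C.

(* Laurent expansions of meromorphic functions have finite pole order. *)
Definition laurent_germ (L : laurent) : Prop :=
  exists m : int, forall n : int, n < m -> L n = 0.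

(* psi is symplectic at a of order d: its pole at a has order at most d and
   x^d psi(a - x) in C[[x]] is symplectic. *)
Definition symplectic_at (d : int) (L : laurent) : Prop :=
  (forall n : int, n < - d -> L n = 0) /\
  symplectic (fun i : nat => L (i%:Z - d)).

Definition laurent_mul (L1 L2 : laurent) : laurent :=
  fun n => (\sum_(i \in [set: int]) L1 i * L2 (n - i))%R.

End Defs.

From HB Require Import structures.
From mathcomp Require Import all_boot all_order all_algebra.
From mathcomp Require Import complex.
From mathcomp Require Import classical_sets fsbigop reals.
From mathcomp Require Import zify.
Set Implicit Arguments. Unset Strict Implicit. Unset Printing Implicit Defensive.
Import Order.TTheory GRing.Theory Num.Theory.
Local Open Scope ring_scope.

(* Write s = x^2/(1-x).  The symplectic condition of index m says that the
   coefficient of x^(2m-1) in g (x-1)^(m-1) vanishes.  For k < m,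
   s^k (x-1)^(m-1) = (-1)^k x^(2k) (x-1)^(m-1-k) has degree m-1+k < 2m-1,
   and for k >= m the power s^k has order 2k > 2m-1; hence every rho(s) is
   symplectic, and so is every rho1(s) rho2(s), a combination of powers of s.
   Conversely, choosing rho recursively to match the even coefficients of a
   symplectic g, the difference g - rho(s) is symplectic with vanishing even
   coefficients, and the condition of index m then kills its coefficient of
   index 2m-1 by induction.  The Laurent statements are these facts after
   the shift by the pole order. *)

Lemma big_ord_vanishing (V : nmodType) n m (F : nat -> V) : (m <= n)%N ->
  (forall j, (m <= j)%N -> (j < n)%N -> F j = 0) ->
  \sum_(j < n) F j = \sum_(j < m) F j.
Proof.
move=> Hmn F0; rewrite [RHS](big_ord_widen n F Hmn) [RHS]big_mkcond /=.
apply: eq_bigr => [[j Hj]] _ /=; case: ltnP => // Hmj.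
exact: F0.
Qed.

Section SymplecticSeries.
Variable C : comRingType.
Implicit Types (f g : fps C) (p q r : {poly C}).

Definition trunc N f : {poly C} := \poly_(i < N) f i.

Definition eqmodX N p q := forall i, (i < N)%N -> p`_i = q`_i.

Lemma eqmodX_trans N p q r : eqmodX N p q -> eqmodX N q r -> eqmodX N p r.
Proof. by move=> Hpq Hqr i Hi; rewrite Hpq // Hqr. Qed.

Lemma eqmodX_mull N r p q : eqmodX N p q -> eqmodX N (r * p) (r * q).
Proof.
move=> Hpq i Hi; rewrite !coefM; apply: eq_bigr => j _; rewrite Hpq //.
exact: leq_ltn_trans (leq_subr _ _) Hi.
Qed.

Lemma eqmodX_mul N p p' q q' :
  eqmodX N p p' -> eqmodX N q q' -> eqmodX N (p * q) (p' * q').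
Proof.
move=> Hp Hq; apply: (eqmodX_trans (eqmodX_mull p Hq)).
by rewrite (mulrC p) (mulrC p'); exact: eqmodX_mull.
Qed.

Lemma eqmodX_exp N p q k : eqmodX N p q -> eqmodX N (p ^+ k) (q ^+ k).
Proof.
move=> Hpq; elim: k => [|k IHk]; first by rewrite !expr0.
by rewrite !exprS; apply: eqmodX_mul.
Qed.

Lemma coef_trunc N f i : (trunc N f)`_i = if (i < N)%N then f i else 0.
Proof. exact: coef_poly. Qed.

Lemma trunc_mul N f g : eqmodX N (trunc N (fps_mul f g)) (trunc N f * trunc N g).
Proof.
move=> n Hn; rewrite coef_trunc Hn coefM; apply: eq_bigr => [[j Hj]] _ /=.
rewrite !coef_trunc ifT; last exact: leq_ltn_trans Hn.
by rewrite ifT //; apply: leq_ltn_trans (leq_subr _ _) Hn.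
Qed.

Lemma trunc_exp N f k : eqmodX N (trunc N (fps_pow f k)) (trunc N f ^+ k).
Proof.
elim: k => [|k IHk]; first by move=> i Hi; rewrite coef_trunc Hi expr0 coef1.
apply: (eqmodX_trans (@trunc_mul _ _ _)); rewrite exprS; exact: eqmodX_mul.
Qed.

Lemma eq_symplectic f g : f =1 g -> symplectic f -> symplectic g.
Proof. by move=> Efg Hf m Hm; under eq_bigr do rewrite -Efg; exact: Hf. Qed.

Lemma symplectic_one : symplectic (fps_one C).
Proof.
move=> m Hm; rewrite big1 // => k _; rewrite /fps_one.
have -> : ((m + k)%N == 0%N) = false by lia.
by rewrite mulr0.
Qed.

Lemma symplecticD f g : symplectic f -> symplectic g -> symplectic (fps_add f g).
Proof.
move=> Hf Hg m Hm; under eq_bigr do rewrite mulrDr.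
by rewrite big_split /= (Hf m Hm) (Hg m Hm) addr0.
Qed.

Lemma symplecticB f g :
  symplectic f -> symplectic g -> symplectic (fun n => f n - g n).
Proof.
move=> Hf Hg m Hm; under eq_bigr do rewrite mulrBr.
by rewrite sumrB (Hf m Hm) (Hg m Hm) subr0.
Qed.

Lemma symplecticZ c f : symplectic f -> symplectic (fps_scale c f).
Proof.
move=> Hf m Hm; under eq_bigr do rewrite mulrCA.
by rewrite -mulr_sumr (Hf m Hm) mulr0.
Qed.

Lemma symplecticE f m N : (0 < m)%N -> (2 * m <= N)%N ->
  \sum_(k < m) (-1) ^+ k * ('C(m.-1, k))%:R * f (m + k)%N =
  (trunc N f * ('X - 1) ^+ m.-1)`_((2 * m).-1).
Proof.
case: m => // m _ HN /=.
have -> : ('X - 1) ^+ m =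
    \sum_(k < m.+1) ((-1) ^+ k * ('C(m, k))%:R) *: ('X^(m - k) : {poly C}).
  rewrite exprDn; apply: eq_bigr => k _.
  by rewrite -scalerA scaler_nat mulrC -mulrnAr -mul_polyC rmorphXn rmorphN1.
rewrite mulr_sumr coef_sum; apply: eq_bigr => [[k Hk]] _ /=.
rewrite -scalerAr coefZ coefMXn ifF; last by lia.
rewrite coef_trunc ifT; last by lia.
by congr (_ * f _); lia.
Qed.

Lemma symplecticP f : symplectic f <-> forall m, (0 < m)%N ->
  (trunc (2 * m) f * ('X - 1) ^+ m.-1)`_((2 * m).-1) = 0.
Proof.
by split=> Hf m Hm; [rewrite -symplecticE | rewrite (symplecticE _ Hm (leqnn _))]; auto.
Qed.

(* Polynomial stand-in for x^2/(1-x) modulo x^N. *)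
Definition spoly N : {poly C} := 'X^2 * trunc N (fun _ => 1).

Lemma trunc_fps_s N : eqmodX N (trunc N (fps_s C)) (spoly N).
Proof.
apply: (eqmodX_trans (@trunc_mul _ _ _)); apply: eqmodX_mul => // i Hi.
by rewrite coef_trunc Hi coefXn.
Qed.

Lemma coef_fps_pow_s N k i :
  (i < N)%N -> fps_pow (fps_s C) k i = (spoly N ^+ k)`_i.
Proof.
move=> Hi; have := @trunc_exp N (fps_s C) k i Hi; rewrite coef_trunc Hi => ->.
exact: (eqmodX_exp k (@trunc_fps_s N)) i Hi.
Qed.

Lemma coef_spoly_exp_small N k i : (i < 2 * k)%N -> (spoly N ^+ k)`_i = 0.
Proof. by move=> Hi; rewrite /spoly exprMn -exprM coefXnM Hi. Qed.

Lemma coef_spoly_exp_double N k : (0 < N)%N -> (spoly N ^+ k)`_(2 * k) = 1.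
Proof.
move=> HN; rewrite /spoly exprMn -exprM coefXnM ltnn subnn.
elim: k => [|k IHk]; first by rewrite expr0 coef1.
by rewrite exprS coef0M IHk coef_trunc HN mulr1.
Qed.

(* Modulo x^N, s (x - 1) = -x^2. *)
Lemma coef_spoly_exp_mul_subX1 N m k : (0 < m)%N -> (2 * m <= N)%N ->
  (spoly N ^+ k * ('X - 1) ^+ m.-1)`_((2 * m).-1) = 0.
Proof.
move=> Hm HN; have [Hmk|Hkm] := leqP m k.
  by rewrite /spoly exprMn -exprM -mulrA coefXnM ifT //; lia.
have Hk : (k <= m.-1)%N by lia.
have geomE : trunc N (fun _ => 1) * ('X - 1) = 'X^N - 1.
  rewrite subrX1 mulrC; congr (_ * _); rewrite /trunc poly_def.
  by apply: eq_bigr => i _; rewrite scale1r.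
rewrite -(subnKC Hk) exprD.
have -> : spoly N ^+ k * (('X - 1) ^+ k * ('X - 1) ^+ (m.-1 - k)) =
    'X^(2 * k) * (('X^N - 1) ^+ k * ('X - 1) ^+ (m.-1 - k)).
  by rewrite /spoly exprMn -exprM -geomE exprMn !mulrA.
rewrite coefXnM ifF; last by lia.
have XN1 : eqmodX N ('X^N - 1) (-1).
  by move=> i Hi; rewrite coefB coefXn coefN coef1 (ltn_eqF Hi) sub0r.
rewrite (eqmodX_mul (eqmodX_exp k XN1) (fun i _ => erefl _)); last by lia.
rewrite -signr_odd mulr_sign -polyC1.
by case: ifP => _; rewrite ?coefN nth_default ?oppr0 // size_exp_XsubC; lia.
Qed.

Definition comp_spoly (rho : fps C) N := \sum_(k < N) rho k *: spoly N ^+ k.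

Lemma trunc_comp rho N :
  eqmodX N (trunc N (fps_comp rho (fps_s C))) (comp_spoly rho N).
Proof.
move=> i Hi; rewrite coef_trunc Hi /fps_comp /comp_spoly coef_sum.
rewrite (@big_ord_vanishing _ N i.+1 (fun k => (rho k *: spoly N ^+ k)`_i)) //.
  by apply: eq_bigr => k _; rewrite coefZ (coef_fps_pow_s _ Hi).
by move=> j Hj _; rewrite coefZ coef_spoly_exp_small ?mulr0 //; lia.
Qed.

Lemma symplectic_comp_s rho : symplectic (fps_comp rho (fps_s C)).
Proof.
apply/symplecticP => m Hm.
rewrite (eqmodX_mul (@trunc_comp rho (2 * m)) (fun i _ => erefl _)); last by lia.
rewrite /comp_spoly mulr_suml coef_sum big1 // => k _.
by rewrite -scalerAl coefZ coef_spoly_exp_mul_subX1 ?mulr0.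
Qed.

Lemma symplectic_even_eq0 (h : fps C) :
  symplectic h -> (forall k, h (2 * k)%N = 0) -> forall n, h n = 0.
Proof.
move=> Hh Heven; elim/ltn_ind => n IHn.
have E := odd_double_half n; rewrite -mul2n in E.
case Hodd: (odd n) E => /= E; last by rewrite -E add0n Heven.
have := Hh (n./2).+1 erefl; rewrite big_ord_recr /= big1; last first.
  by move=> [k Hk] _ /=; rewrite IHn ?mulr0 //; lia.
have -> : ((n./2).+1 + n./2)%N = n by lia.
rewrite binn mulr1 add0r -signr_odd mulr_sign.
by case: ifP => _ // /eqP; rewrite oppr_eq0 => /eqP.
Qed.

(* [rho_seq g k] lists rho_0, ..., rho_(k-1), where rho_k is chosen so that
   rho(s) and g agree at index 2k; only s^j with j <= k contribute there. *)
Fixpoint rho_seq g k : seq C :=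
  if k is k'.+1 then rcons (rho_seq g k')
    (g (2 * k')%N -
     \sum_(j < k') nth 0 (rho_seq g k') j * fps_pow (fps_s C) j (2 * k'))
  else [::].

Definition rho_of g k := nth 0 (rho_seq g k.+1) k.

Lemma size_rho_seq g k : size (rho_seq g k) = k.
Proof. by elim: k => //= k IHk; rewrite size_rcons IHk. Qed.

Lemma nth_rho_seq g k j : (j < k)%N -> nth 0 (rho_seq g k) j = rho_of g j.
Proof.
elim: k => // k IHk Hj; have [Hjk|Hkj] := ltnP j k.
  by rewrite /= nth_rcons size_rho_seq Hjk; exact: IHk.
by have -> : j = k by lia.
Qed.

Lemma rho_ofE g k : rho_of g k =
  g (2 * k)%N - \sum_(j < k) rho_of g j * fps_pow (fps_s C) j (2 * k).
Proof.
rewrite {1}/rho_of /= nth_rcons size_rho_seq ltnn eqxx; congr (_ - _).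
by apply: eq_bigr => [[j Hj]] _ /=; rewrite nth_rho_seq.
Qed.

Lemma comp_rho_of_even g k :
  fps_comp (rho_of g) (fps_s C) (2 * k)%N = g (2 * k)%N.
Proof.
rewrite /fps_comp (@big_ord_vanishing _ _ k.+1
  (fun j => rho_of g j * fps_pow (fps_s C) j (2 * k))); first last.
- by move=> j Hkj _; rewrite (@coef_fps_pow_s (2 * k).+1) //
    coef_spoly_exp_small ?mulr0 //; lia.
- by lia.
rewrite big_ord_recr /= (@coef_fps_pow_s (2 * k).+1) // coef_spoly_exp_double //.
by rewrite mulr1 [rho_of g k]rho_ofE addrC subrK.
Qed.

Lemma symplectic_comp_rho_of g :
  symplectic g -> g =1 fps_comp (rho_of g) (fps_s C).
Proof.
move=> Hg n; apply/eqP; rewrite -subr_eq0; apply/eqP.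
apply: (@symplectic_even_eq0 (fun n => g n - fps_comp (rho_of g) (fps_s C) n)).
  exact: symplecticB Hg (symplectic_comp_s _).
by move=> k; rewrite comp_rho_of_even subrr.
Qed.

Lemma symplecticM f g : symplectic f -> symplectic g -> symplectic (fps_mul f g).
Proof.
move=> Hf Hg; apply/symplecticP => m Hm.
have truncE h : symplectic h ->
    eqmodX (2 * m) (trunc (2 * m) h) (comp_spoly (rho_of h) (2 * m)).
  move=> Hh; apply: eqmodX_trans (@trunc_comp (rho_of h) (2 * m)).
  by move=> i Hi; rewrite !coef_trunc Hi (symplectic_comp_rho_of Hh).
rewrite (eqmodX_mul (eqmodX_trans (@trunc_mul _ _ _)
  (eqmodX_mul (truncE _ Hf) (truncE _ Hg))) (fun i _ => erefl _)); last by lia.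
rewrite /comp_spoly mulr_suml mulr_suml coef_sum big1 // => k _.
rewrite mulr_sumr mulr_suml coef_sum big1 // => l _.
rewrite -scalerAl -scalerAr -scalerAl !coefZ -exprD -scalerAl coefZ.
by rewrite coef_spoly_exp_mul_subX1 ?mulr0.
Qed.

Lemma laurent_mulE d1 d2 (L1 L2 : laurent C) :
  (forall n, n < - d1 -> L1 n = 0) -> (forall n, n < - d2 -> L2 n = 0) ->
  forall n, laurent_mul L1 L2 n =
    if 0 <= n + (d1 + d2) then
      fps_mul (fun i : nat => L1 (i%:Z - d1)) (fun i : nat => L2 (i%:Z - d2))
        (absz (n + (d1 + d2)))
    else 0.
Proof.
move=> H1 H2 n; rewrite /laurent_mul; case: ifP => Hn; last first.
  rewrite fsbig1 // => i _.
  have [Hi|Hi] : i < - d1 \/ n - i < - d2 by lia.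
    by rewrite H1 ?mul0r.
  by rewrite H2 ?mulr0.
set M := (absz (n + (d1 + d2))).+1.
pose r := map (fun k : nat => k%:Z - d1) (iota 0 M).
rewrite -(fsbig_widen [set` r] setT) //; last first.
  move=> i [_ /= Hi].
  have [Hi1|[Hi2|Hi12]] :
      i < - d1 \/ n - i < - d2 \/ (- d1 <= i /\ - d2 <= n - i) by lia.
  - by rewrite H1 ?mul0r.
  - by rewrite H2 ?mulr0.
  - exfalso; apply: Hi; apply/mapP; exists (absz (i + d1)); last by lia.
    by rewrite mem_iota; lia.
rewrite (fsbig_fwiden r) //; last 2 first.
- by rewrite map_inj_uniq ?iota_uniq // => a b Hab; lia.
- by move=> x [].
rewrite big_map.
have -> : iota 0 M = index_iota 0 M by rewrite /index_iota subn0.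
rewrite big_mkord; apply: eq_bigr => [[k Hk]] _ /=.
by congr (_ * L2 _); lia.
Qed.

Lemma symplectic_atP d (L : laurent C) : symplectic_at d L <->
  exists rho : fps C, forall n : int,
    L n = if 0 <= n + d then fps_comp rho (fps_s C) (absz (n + d)) else 0.
Proof.
split=> [[L0 HL]|[rho HL]].
  exists (rho_of (fun i : nat => L (i%:Z - d))) => n.
  case: ifP => Hn; last by apply: L0; lia.
  by rewrite -(symplectic_comp_rho_of HL); congr L; lia.
split=> [n Hn|]; first by rewrite HL ifF //; lia.
apply: (eq_symplectic _ (symplectic_comp_s rho)) => i.
by rewrite HL ifT; [congr (fps_comp rho _ _); lia | lia].
Qed.

Lemma symplectic_at_mul d1 d2 (L1 L2 : laurent C) :
  symplectic_at d1 L1 -> symplectic_at d2 L2 ->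
  symplectic_at (d1 + d2) (laurent_mul L1 L2).
Proof.
move=> [H1 S1] [H2 S2]; split=> [n Hn|].
  by rewrite (laurent_mulE H1 H2) ifF //; lia.
apply: (eq_symplectic _ (symplecticM S1 S2)) => i.
rewrite (laurent_mulE H1 H2) ifT; last by lia.
by congr (fps_mul _ _ _); lia.
Qed.

End SymplecticSeries.

Local Open Scope complex_scope.

Theorem corollary1p5 (R : realType) :
  (symplectic (fps_one R[i]) /\
   (forall f g : fps R[i], symplectic f -> symplectic g ->
      symplectic (fps_add f g) /\ symplectic (fps_mul f g)) /\
   (forall (c : R[i]) (f : fps R[i]), symplectic f -> symplectic (fps_scale c f)))
  /\
  (forall (d : int) (L : laurent R[i]), laurent_germ L ->
     symplectic_at d L <->
     exists rho : fps R[i], forall n : int,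
       L n = (if (0 <= n + d)%R then fps_comp rho (fps_s R[i]) (absz (n + d)) else 0))
  /\
  (forall (d1 d2 : int) (L1 L2 : laurent R[i]),
     laurent_germ L1 -> laurent_germ L2 ->
     symplectic_at d1 L1 -> symplectic_at d2 L2 ->
     symplectic_at (d1 + d2) (laurent_mul L1 L2)).
Proof.
split; first split; [exact: symplectic_one | split |].
- by move=> f g Hf Hg; split; [exact: symplecticD | exact: symplecticM].
- exact: symplecticZ.
- by split=> [d L _ | d1 d2 L1 L2 _ _]; [exact: symplectic_atP | exact: symplectic_at_mul].
Qed.
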